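(* Let $G=(\mathcal V,\mathcal E)$ be a strongly connected digraph with $N>2$ nodes and let the weights $p_{ij}(k)$, $\alpha_i(k)$ be generated as in the Privacy-Preserving Push-Sum Algorithm described in the context. For $k\ge 1$ define the $2N\times 2N$ matrices $$\hat P(k)=\begin{bmatrix} P(k) & I_N\\ \Lambda(k) & 0\end{bmatrix},\qquad P(k)=[p_{ij}(k)]_{i,j=1}^N,\quad \Lambda(k)=\mathrm{diag}(\alpha_1(k),\dots,\alpha_N(k)),$$ and $T_k=\hat P(k)\hat P(k-1)\cdots \hat P(1)$. Then the coefficient of ergodicity $\delta(T_k)$ converges to $0$ almost surely as $k\to\infty$.
   Context: Digraph conventions: $\mathcal V=\{1,\dots,N\}$, no self-loops; $(j,i)\in\mathcal E$ means node $i$ can send messages to node $j$. $N_i^{in}=\{j:(i,j)\in\mathcal E\}$, $N_i^{out}=\{j:(j,i)\in\mathcal E\}$. Strongly connected: a directed path exists from any node to any other node. Privacy-Preserving Push-Sum Algorithm (each node $i$ has a private real initial state $x_i(0)$; $M>0$ is a fixed constant). Initialization: node $i$ draws $x^\alpha_{i,1}(0)\sim U(-M,M)$ and sets $x^\beta_{i,1}(0)=2x_i(0)-x^\alpha_{i,1}(0)$, $x^\alpha_{i,2}(0)=0$, $x^\beta_{i,2}(0)=2$. Weights: at $k=0$, node $i$ draws the numbers $\{p_{ji}(0):j\in N_i^{out}\cup\{i\}\}$ and $\alpha_i(0)$ independently from $\mathcal N(0,M)$ and normalizes them so that $\sum_{j=1}^N p_{ji}(0)+\alpha_i(0)=1$;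 at each $k\ge1$, node $i$ draws $\{p_{ji}(k):j\in N_i^{out}\cup\{i\}\}$ and $\alpha_i(k)$ independently from $U(0,1)$ and normalizes them so that $\sum_{j=1}^N p_{ji}(k)+\alpha_i(k)=1$; in all cases $p_{ji}(k)=0$ if $j\notin N_i^{out}\cup\{i\}$. State update, for $k\ge0$, $l=1,2$: node $i$ sends $p_{ji}(k)x^\alpha_{i,l}(k)$ to each $j\in N_i^{out}$ and updates $$x^\alpha_{i,l}(k+1)=\sum_{j\in N_i^{in}\cup\{i\}}p_{ij}(k)x^\alpha_{j,l}(k)+x^\beta_{i,l}(k),\qquad x^\beta_{i,l}(k+1)=\alpha_i(k)x^\alpha_{i,l}(k).$$ Node $i$'s estimated average is $\hat x^{ave}_i(k+1)=x^\alpha_{i,1}(k+1)/x^\alpha_{i,2}(k+1)$. The substate $x^\beta_{i,l}$ is never transmitted. Coefficient of ergodicity: for a column-stochastic matrix $P_c$, $\delta(P_c)=\max_j\max_{i_1,i_2}|[P_c]_{j i_1}-[P_c]_{j i_2}|$. *)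

From HB Require Import structures.
From mathcomp Require Import all_boot all_order all_algebra.
From mathcomp Require Import all_classical all_reals all_analysis.
Set Implicit Arguments. Unset Strict Implicit. Unset Printing Implicit Defensive.
Import Order.TTheory GRing.Theory Num.Theory.
Import numFieldNormedType.Exports.
Local Open Scope classical_set_scope.
Local Open Scope ring_scope.

Definition mutually_independent d (T : measurableType d) (R : realType)
  (P : probability T R) (I : eqType) (D : set I) (X : I -> T -> R) : Prop :=
  forall (s : seq I) (B : I -> set R),
    uniq s -> (forall i, i \in s -> D i) -> (forall i, measurable (B i)) ->
    P (\big[setI/setT]_(i <- s) (X i @^-1` B i)) =
    (\big[*%E/1%E]_(i <- s) P (X i @^-1` B i))%E.

Definition uniform01 d (T : measurableType d) (R : realType)
  (P : probability T R) (X : T -> R) : Prop :=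
  measurable_fun setT X /\
  forall B : set R, measurable B ->
    P (X @^-1` B) = (@lebesgue_measure R) (B `&` `]0%R, 1%R[).

(* Graph: E j i (i.e. (j,i) \in E) means node i can send messages to node j. *)
Definition no_self_loops N (E : rel 'I_N) : Prop := forall i, ~~ E i i.
Definition sends N (E : rel 'I_N) : rel 'I_N := fun i j => E j i.
Definition strongly_connected N (E : rel 'I_N) : Prop :=
  forall a b : 'I_N, connect (sends E) a b.

Definition out_or_self N (E : rel 'I_N) (i j : 'I_N) : bool := E j i || (j == i).

(* Raw draws: W k i (Some j) is node i's draw for p_{ji}(k) (j in N_i^out or j = i),
   W k i None is node i's draw for alpha_i(k).  Relevant draws for k >= 1: *)
Definition relevant_index N (E : rel 'I_N) : set (nat * 'I_N * option 'I_N) :=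
  fun t => let: (k, i, o) := t in
    (0 < k)%N /\ (if o is Some j then out_or_self E i j else true).

Section Weights.
Variables (R : realType) (N : nat) (E : rel 'I_N) (Om : Type).
Variable W : nat -> 'I_N -> option 'I_N -> Om -> R.

Definition norm_sum (k : nat) (i : 'I_N) (w : Om) : R :=
  \sum_(j < N | out_or_self E i j) W k i (Some j) w + W k i None w.

(* p_{ij}(k): weight with which node j sends to node i *)
Definition pw (k : nat) (i j : 'I_N) (w : Om) : R :=
  if out_or_self E j i then W k j (Some i) w / norm_sum k j w else 0.

Definition alphaw (k : nat) (i : 'I_N) (w : Om) : R :=
  W k i None w / norm_sum k i w.

Definition Pmat (k : nat) (w : Om) : 'M[R]_N := \matrix_(i, j) pw k i j w.
Definition Lambda (k : nat) (w : Om) : 'M[R]_N := diag_mx (\row_i alphaw k i w).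

Definition Phat (k : nat) (w : Om) : 'M[R]_(N + N) :=
  block_mx (Pmat k w) 1%:M (Lambda k w) 0.

Fixpoint Tprod (k : nat) (w : Om) : 'M[R]_(N + N) :=
  match k with
  | 0 => 1%:M
  | k'.+1 => Phat k'.+1 w *m Tprod k' w
  end.
End Weights.

Definition ergodicity_coef (R : realType) n (M : 'M[R]_n) : R :=
  \big[Num.max/0]_(j < n) \big[Num.max/0]_(i1 < n) \big[Num.max/0]_(i2 < n)
     `|M j i1 - M j i2|.

From HB Require Import structures.
From mathcomp Require Import all_boot all_order all_algebra.
From mathcomp Require Import all_classical all_reals all_analysis.
From mathcomp Require Import ring.
Set Implicit Arguments.
Unset Strict Implicit.
Unset Printing Implicit Defensive.
Import Order.TTheory GRing.Theory Num.Theory.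
Import numFieldNormedType.Exports.
Local Open Scope classical_set_scope.
Local Open Scope ring_scope.

(* Whenever all draws of step k lie in (0, 1), Phat(k)
   is column stochastic.  For column-stochastic matrices the l1 distance
   between two columns never increases under left multiplication by a
   column-stochastic matrix, and shrinks by a factor (1 - g) when that
   matrix has all entries >= g; it also dominates delta.  The support graph
   of Phat (the "augmented graph" on 2N states) joins any two states by walks
   of one common length L, so a block of L consecutive steps whose draws are
   all >= 1/2 has all entries >= (2(N+1))^-L.  Infinitely many such blocks
   therefore force delta(T_k) -> 0.

   Each draw is almost surely in (0, 1), and the events
   "block m is good" are independent with a common positive probability, so
   almost surely good blocks occur beyond any time (the probability that none
   of r of them occurs is (1 - q)^r). *)

Section ColumnStochastic.
Variables (R : realType) (n : nat).
Implicit Types A M : 'M[R]_n.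

Definition col_stochastic M :=
  (forall i j, 0 <= M i j) /\ (forall j, \sum_i M i j = 1).

(* l1 distance between columns i1 and i2; it dominates every entry difference
   |M j i1 - M j i2| and hence the coefficient of ergodicity. *)
Definition col_dist M i1 i2 := \sum_j `|M j i1 - M j i2|.

Lemma col_stochastic1 : col_stochastic 1%:M.
Proof.
split=> [i j|j]; first by rewrite mxE ler0n.
rewrite (bigD1 j) //= big1 ?addr0; first by rewrite mxE eqxx.
by move=> i /negbTE ij; rewrite mxE ij.
Qed.

Lemma col_stochasticM A M :
  col_stochastic A -> col_stochastic M -> col_stochastic (A *m M).
Proof.
move=> [A0 A1] [M0 M1]; split=> [i j|j].
  by rewrite mxE; apply: sumr_ge0 => k _; apply: mulr_ge0.
under eq_bigr do rewrite mxE.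
rewrite exchange_big /= -(M1 j); apply: eq_bigr => k _.
by rewrite -mulr_suml A1 mul1r.
Qed.

Lemma mulmx_col_diff A M j i1 i2 :
  (A *m M) j i1 - (A *m M) j i2 = \sum_k A j k * (M k i1 - M k i2).
Proof. by rewrite !mxE -sumrB; apply: eq_bigr => k _; rewrite mulrBr. Qed.

Lemma col_dist_mulmx_le A M i1 i2 :
  col_stochastic A -> col_dist (A *m M) i1 i2 <= col_dist M i1 i2.
Proof.
move=> [A0 A1]; rewrite /col_dist.
apply: (@le_trans _ _ (\sum_j \sum_k A j k * `|M k i1 - M k i2|)).
  apply: ler_sum => j _; rewrite mulmx_col_diff.
  apply: (le_trans (ler_norm_sum _ _ _)); apply: ler_sum => k _.
  by rewrite normrM ger0_norm.
rewrite exchange_big /=; apply: ler_sum => k _.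
by rewrite -mulr_suml A1 mul1r.
Qed.

(* Dobrushin-type contraction: if all entries of A are at least g, the column
   difference of a stochastic M (which sums to 0) loses a factor (1 - g). *)
Lemma col_dist_mulmx_contract A M i1 i2 (g : R) :
  (0 < n)%N -> col_stochastic A -> col_stochastic M ->
  0 <= g -> (forall j k, g <= A j k) ->
  col_dist (A *m M) i1 i2 <= (1 - g) * col_dist M i1 i2.
Proof.
move=> n0 [A0 A1] [M0 M1] g0 Ag; rewrite /col_dist.
have sum_diff0 : \sum_k (M k i1 - M k i2) = 0 by rewrite sumrB !M1 subrr.
apply: (@le_trans _ _ (\sum_j \sum_k (A j k - g) * `|M k i1 - M k i2|)).
  apply: ler_sum => j _; rewrite mulmx_col_diff.
  have -> : \sum_k A j k * (M k i1 - M k i2) =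
            \sum_k (A j k - g) * (M k i1 - M k i2).
    under [RHS]eq_bigr do rewrite mulrBl.
    by rewrite sumrB -mulr_sumr sum_diff0 mulr0 subr0.
  apply: (le_trans (ler_norm_sum _ _ _)); apply: ler_sum => k _.
  by rewrite normrM (@ger0_norm _ (A j k - g)) // subr_ge0.
rewrite exchange_big /= mulr_sumr; apply: ler_sum => k _.
rewrite -mulr_suml sumrB A1 sumr_const card_ord.
apply: ler_wpM2r => //.
by rewrite lerD2l lerN2 -mulr_natr ler_peMr // ler1n.
Qed.

Lemma col_dist_le2 M i1 i2 : col_stochastic M -> col_dist M i1 i2 <= 2.
Proof.
move=> [M0 M1]; rewrite /col_dist.
apply: (@le_trans _ _ (\sum_j (M j i1 + M j i2))).
  apply: ler_sum => j _; apply: (le_trans (ler_normB _ _)).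
  by rewrite !ger0_norm.
by rewrite big_split /= !M1.
Qed.

Lemma ergodicity_coef_le M b :
  0 <= b -> (forall i1 i2, col_dist M i1 i2 <= b) -> ergodicity_coef M <= b.
Proof.
move=> b0 H; apply: bigmax_le => // j _; apply: bigmax_le => // i1 _.
apply: bigmax_le => // i2 _; apply: le_trans (H i1 i2).
by rewrite /col_dist (bigD1 j) //= lerDl sumr_ge0.
Qed.

Lemma ergodicity_coef_ge0 M : 0 <= ergodicity_coef M.
Proof.
rewrite /ergodicity_coef; elim/big_rec: _ => // i x _ Hx.
by rewrite le_max Hx orbT.
Qed.

End ColumnStochastic.

Section Walks.
Variables (V : finType) (adj : rel V).

Fixpoint walk (m : nat) (x y : V) : bool :=
  if m is m'.+1 then [exists z, adj x z && walk m' z y] else x == y.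

Lemma walk_cons m x z y : adj x z -> walk m z y -> walk m.+1 x y.
Proof. by move=> xz zy /=; apply/existsP; exists z; rewrite xz. Qed.

Lemma walk_rcons m x z y : walk m x z -> adj z y -> walk m.+1 x y.
Proof.
elim: m x => [|m IH] x.
  by move=> /= /eqP -> zy; exact: (@walk_cons 0 _ _ _ zy (eqxx y)).
move=> /existsP [u /andP [xu uz]] zy; exact: walk_cons xu (IH _ uz zy).
Qed.

Lemma walk_pad m k x y : adj x x -> walk m x y -> walk (k + m) x y.
Proof. by move=> xx xy; elim: k => //= k IH; apply: walk_cons xx IH. Qed.

Lemma walk_of_connect (U : finType) (e : rel U) (f : U -> V) a b :
  (forall u v, e u v -> adj (f v) (f u)) -> connect e b a ->
  exists m, walk m (f a) (f b).
Proof.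
move=> ef /connectP [p pth ->]; elim: p b pth => [|c p IH] b /=.
  by exists 0%N => /=.
move=> /andP [bc cp]; have [m Hm] := IH _ cp.
by exists m.+1; apply: walk_rcons Hm (ef _ _ bc).
Qed.

Lemma walk_common_length (U : finType) (f : U -> V) :
  (forall a, adj (f a) (f a)) -> (forall a b, exists m, walk m (f a) (f b)) ->
  exists D, forall a b, walk D (f a) (f b).
Proof.
move=> loop conn.
suff [D HD] : exists D,
    forall p, p \in enum [set: U * U] -> walk D (f p.1) (f p.2).
  by exists D => a b; apply: (HD (a, b)); rewrite mem_enum inE.
elim: (enum _) => [|p s [D HD]]; first by exists 0%N.
have [m Hm] := conn p.1 p.2.
exists (D + m)%N => q; rewrite inE => /predU1P [->|qs]; first exact: walk_pad.
by rewrite addnC; apply: walk_pad; [exact: loop | exact: HD].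
Qed.

End Walks.

Section LeftProducts.
Variables (R : realType) (n : nat) (A : nat -> 'M[R]_n).

Fixpoint lprod k := if k is k'.+1 then A k'.+1 *m lprod k' else 1%:M.
Fixpoint lblock b m := if m is m'.+1 then A (b + m'.+1) *m lblock b m' else 1%:M.

Lemma lprod_split b m : lprod (b + m) = lblock b m *m lprod b.
Proof.
elim: m => [|m IH] /=; first by rewrite addn0 mul1mx.
by rewrite addnS /= IH mulmxA.
Qed.

Hypothesis A_stoch : forall k, (0 < k)%N -> col_stochastic (A k).

Lemma lprod_stoch k : col_stochastic (lprod k).
Proof.
elim: k => [|k IH] /=; first exact: col_stochastic1.
exact: col_stochasticM (A_stoch _) IH.
Qed.

Lemma lblock_stoch b m : col_stochastic (lblock b m).
Proof.
elim: m => [|m IH] /=; first exact: col_stochastic1.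
by apply: col_stochasticM IH; apply: A_stoch; rewrite addnS.
Qed.

Lemma col_dist_lprod_mono a k c : (a <= k)%N ->
  (forall i1 i2, col_dist (lprod a) i1 i2 <= c) ->
  forall i1 i2, col_dist (lprod k) i1 i2 <= c.
Proof.
move=> /subnKC <- H i1 i2; rewrite lprod_split.
exact: le_trans (col_dist_mulmx_le _ _ _ (lblock_stoch _ _)) (H i1 i2).
Qed.

(* If infinitely often a block of L consecutive factors has all entries >= g,
   the products become ergodic: each such block multiplies column distances
   by at most 1 - g. *)
Theorem ergodicity_lprod_cvg0 (L : nat) (g : R) :
  (0 < n)%N -> 0 < g -> g <= 1 ->
  (forall a, exists2 b, (a <= b)%N & forall x y, g <= lblock b L x y) ->
  (fun k => ergodicity_coef (lprod k)) @ \oo --> (0 : R).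
Proof.
move=> n0 g0 g1 blocks.
have geom_bound r : exists K, forall i1 i2,
    col_dist (lprod K) i1 i2 <= 2 * (1 - g) ^+ r.
  elim: r => [|r [K HK]].
    by exists 0%N => i1 i2; rewrite expr0 mulr1; apply/col_dist_le2/lprod_stoch.
  have [b Kb Hb] := blocks K; exists (b + L)%N => i1 i2; rewrite lprod_split.
  apply: le_trans (col_dist_mulmx_contract i1 i2 n0 (lblock_stoch _ _)
    (lprod_stoch _) (ltW g0) Hb) _.
  rewrite exprS mulrCA ler_wpM2l ?subr_ge0 //.
  exact: col_dist_lprod_mono Kb HK i1 i2.
have geom_cvg : (fun r => 2 * (1 - g) ^+ r) @ \oo --> (0 : R).
  rewrite -(mulr0 2); apply: cvgM; first exact: cvg_cst.
  by apply: cvg_expr; rewrite ger0_norm ?subr_ge0 // ltrBlDr ltrDl.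
apply/cvgrPdist_le => e e0.
move/cvgrPdist_le: geom_cvg => /(_ e e0) [M _ HM].
have [K HK] := geom_bound M.
near=> k.
rewrite sub0r normrN ger0_norm ?ergodicity_coef_ge0 //.
have Kk : (K <= k)%N by near: k; exact: nbhs_infty_ge.
apply: ergodicity_coef_le => [|i1 i2]; first exact: ltW.
apply: le_trans (col_dist_lprod_mono Kk HK i1 i2) _.
have := HM M (leqnn M); rewrite sub0r normrN ger0_norm //.
by rewrite mulr_ge0 // exprn_ge0 // subr_ge0.
Unshelve. all: end_near.
Qed.

Lemma lblock_walk_lb (adj : rel 'I_n) b m (c : R) : 0 <= c ->
  (forall t, (t < m)%N -> forall x y, adj x y -> c <= A (b + t.+1) x y) ->
  forall x y, walk adj m x y -> c ^+ m <= lblock b m x y.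
Proof.
move=> c0; elim: m => [|m IH] Hc x y /=.
  by move=> /eqP ->; rewrite mxE eqxx.
move=> /existsP [z /andP [xz zy]].
have [A0 _] : col_stochastic (A (b + m.+1)) by apply: A_stoch; rewrite addnS.
have [B0 _] := lblock_stoch b m.
rewrite mxE (bigD1 z) //= exprS -[c * _]addr0.
apply: lerD; last by apply: sumr_ge0 => u _; apply: mulr_ge0.
apply: ler_pM; rewrite ?exprn_ge0 //; first exact: Hc.
by apply: IH => // t tm; apply: Hc; apply: ltnW.
Qed.

End LeftProducts.

Section AugmentedGraph.
Variables (N : nat) (E : rel 'I_N).

(* Support graph of Phat on the 2N states: the first N states carry the
   edges of P, the first and second copies of node i are linked both ways by
   the blocks I_N and Lambda. aug_edge x y says that entry (x, y) may be
   positive. *)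
Definition aug_edge (x y : 'I_(N + N)) : bool :=
  match fintype.split x, fintype.split y with
  | inl i, inl j => out_or_self E j i
  | inl i, inr j => i == j
  | inr i, inl j => i == j
  | inr _, inr _ => false
  end.

Lemma aug_edge_loop i : aug_edge (lshift N i) (lshift N i).
Proof. by rewrite /aug_edge (unsplitK (inl i)) /out_or_self eqxx orbT. Qed.

Lemma aug_walk_uniform : strongly_connected E ->
  exists2 L, (0 < L)%N & forall x y, walk aug_edge L x y.
Proof.
move=> sc.
have [D HD] : exists D, forall a b, walk aug_edge D (lshift N a) (lshift N b).
  apply: walk_common_length => [a|a b]; first exact: aug_edge_loop.
  apply: walk_of_connect (sc b a) => u v uv.
  by rewrite /aug_edge !(unsplitK (inl _)); apply/orP; left.
have toR a : aug_edge (lshift N a) (rshift N a).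
  by rewrite /aug_edge (unsplitK (inl a)) (unsplitK (inr a)).
have fromR a : aug_edge (rshift N a) (lshift N a).
  by rewrite /aug_edge (unsplitK (inl a)) (unsplitK (inr a)).
exists D.+2 => // x y.
case: (split_ordP x) => a ->; case: (split_ordP y) => b ->.
- by apply: (walk_pad 2 (aug_edge_loop a)).
- by apply: walk_cons (aug_edge_loop a) (walk_rcons (HD a b) (toR b)).
- by apply: walk_cons (fromR a) (walk_pad 1 (aug_edge_loop a) (HD a b)).
- by apply: walk_cons (fromR a) (walk_rcons (HD a b) (toR b)).
Qed.

End AugmentedGraph.

Definition drawn N (E : rel 'I_N) (i : 'I_N) (o : option 'I_N) : bool :=
  if o is Some j then out_or_self E i j else true.

Section PhatBounds.
Variables (R : realType) (N : nat) (E : rel 'I_N) (Om : Type)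
  (W : nat -> 'I_N -> option 'I_N -> Om -> R).

Definition draws_in01 k w := forall i o, drawn E i o -> 0 < W k i o w < 1.
Definition draws_ge_half k w := forall i o, drawn E i o -> 2^-1 <= W k i o w.

Definition edge_lb : R := (2 * N.+1%:R)^-1.

Lemma edge_lb_gt0 : 0 < edge_lb.
Proof. by rewrite invr_gt0 mulr_gt0 // ltr0n. Qed.

Lemma edge_lb_le1 : edge_lb <= 1.
Proof. by rewrite invf_le1 ?mulr_gt0 ?ltr0n // -natrM ler1n muln_gt0. Qed.

Section Step.
Variables (k : nat) (w : Om).

Lemma norm_sum_gt0 (in01 : draws_in01 k w) i : 0 < norm_sum E W k i w.
Proof.
apply: ltr_wpDl; last by case/andP: (in01 i None erefl).
by apply: sumr_ge0 => j ij; case/andP: (in01 i (Some j) ij) => /ltW.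
Qed.

Lemma norm_sum_le (in01 : draws_in01 k w) i : norm_sum E W k i w <= N.+1%:R.
Proof.
rewrite /norm_sum -addn1 natrD; apply: lerD; last first.
  by case/andP: (in01 i None erefl) => _ /ltW.
apply: (@le_trans _ _ (\sum_(j < N) 1)); last by rewrite sumr_const card_ord.
rewrite big_mkcond /=; apply: ler_sum => j _; case: ifP => ij //.
by case/andP: (in01 i (Some j) ij) => _ /ltW.
Qed.

Lemma normalized_ge_edge_lb (in01 : draws_in01 k w) i o : 2^-1 <= W k i o w ->
  edge_lb <= W k i o w / norm_sum E W k i w.
Proof.
move=> half; rewrite ler_pdivlMr ?(norm_sum_gt0 in01) //; apply: le_trans half.
rewrite /edge_lb invfM -mulrA ler_piMr ?invr_ge0 //.
by rewrite mulrC ler_pdivrMr ?ltr0n // mul1r (norm_sum_le in01).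
Qed.

Lemma pw_ge0 (in01 : draws_in01 k w) i j : 0 <= pw E W k i j w.
Proof.
rewrite /pw; case: ifP => // ji; rewrite divr_ge0 ?(ltW (norm_sum_gt0 in01 _)) //.
by case/andP: (in01 j (Some i) ji) => /ltW.
Qed.

Lemma alphaw_ge0 (in01 : draws_in01 k w) i : 0 <= alphaw E W k i w.
Proof.
rewrite divr_ge0 ?(ltW (norm_sum_gt0 in01 _)) //.
by case/andP: (in01 i None erefl) => /ltW.
Qed.

(* Each column of Phat sums to 1: a first-copy column j holds the normalized
   draws of node j, a second-copy column holds a single 1. *)
Lemma Phat_stoch (in01 : draws_in01 k w) : col_stochastic (Phat E W k w).
Proof.
split=> [x y|y].
  case: (split_ordP x) => i ->; case: (split_ordP y) => j ->;
    rewrite /Phat ?block_mxEul ?block_mxEur ?block_mxEdl ?block_mxEdr !mxE //.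
  - exact (pw_ge0 in01 i j).
  - by rewrite mulrn_wge0 // (alphaw_ge0 in01).
rewrite big_split_ord /=; case: (split_ordP y) => j ->.
  under eq_bigr do rewrite /Phat block_mxEul mxE.
  under [X in _ + X]eq_bigr do rewrite /Phat block_mxEdl /Lambda !mxE.
  rewrite [X in _ + X](bigD1 j) //= eqxx mulr1n [X in _ + (_ + X)]big1 ?addr0;
    last by move=> i /negbTE ->; rewrite mulr0n.
  rewrite /pw -big_mkcond /= -mulr_suml /alphaw -mulrDl -/(norm_sum E W k j w).
  by rewrite mulfV // gt_eqF // (norm_sum_gt0 in01).
under eq_bigr do rewrite /Phat block_mxEur mxE.
under [X in _ + X]eq_bigr do rewrite /Phat block_mxEdr mxE.
by rewrite big1_eq addr0 (bigD1 j) //= eqxx big1 ?addr0 // => i /negbTE ->.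
Qed.

Lemma Phat_edge_lb (in01 : draws_in01 k w) : draws_ge_half k w ->
  forall x y, aug_edge E x y -> edge_lb <= Phat E W k w x y.
Proof.
move=> half x y; case: (split_ordP x) => i ->; case: (split_ordP y) => j ->;
  rewrite /aug_edge ?(unsplitK (inl _)) ?(unsplitK (inr _)) //
    /Phat ?block_mxEul ?block_mxEur ?block_mxEdl !mxE.
- by move=> ji; rewrite /pw ji (normalized_ge_edge_lb in01) ?half.
- by move=> /eqP ->; rewrite eqxx edge_lb_le1.
- by move=> /eqP ->; rewrite eqxx mulr1n (normalized_ge_edge_lb in01) ?half.
Qed.

End Step.

Lemma Tprod_lprod k w : Tprod E W k w = lprod (fun k => Phat E W k w) k.
Proof. by elim: k => //= k ->. Qed.

Lemma ergodicity_Tprod_cvg0 L w : (0 < N)%N ->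
  (forall x y, walk (aug_edge E) L x y) ->
  (forall k, (0 < k)%N -> draws_in01 k w) ->
  (forall a, exists2 b, (a <= b)%N &
     forall t, (t < L)%N -> draws_ge_half (b + t.+1) w) ->
  (fun k => ergodicity_coef (Tprod E W k w)) @ \oo --> (0 : R).
Proof.
move=> N0 walkL in01 half.
have stoch k : (0 < k)%N -> col_stochastic (Phat E W k w).
  by move=> k0; apply/Phat_stoch/in01.
under eq_fun do rewrite Tprod_lprod.
apply: (ergodicity_lprod_cvg0 (L := L) (g := edge_lb ^+ L) stoch).
- by rewrite addn_gt0 N0.
- by rewrite exprn_gt0 // edge_lb_gt0.
- by rewrite exprn_ile1 ?edge_lb_le1 // ltW // edge_lb_gt0.
move=> a; have [b ab Hb] := half a; exists b => // x y.
apply: (lblock_walk_lb stoch (ltW edge_lb_gt0)) (walkL x y) => t tL.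
by apply: Phat_edge_lb; [apply: in01; rewrite addnS | exact: Hb].
Qed.

End PhatBounds.

Lemma le_all_expr_le0 (R : realType) (z c : R) :
  0 <= c -> c < 1 -> (forall r, z <= c ^+ r) -> z <= 0.
Proof.
move=> c0 c1 zc; rewrite leNgt; apply/negP => z0.
have /cvgrPdist_lt /(_ z z0) [M _ HM] : (GRing.exp c) @ \oo --> (0 : R).
  by apply: cvg_expr; rewrite ger0_norm.
have := HM M (leqnn M); rewrite sub0r normrN ger0_norm ?exprn_ge0 //.
by rewrite ltNge zc.
Qed.

Section IndependentTrials.
Variables (d : measure_display) (T : measurableType d) (R : realType)
  (P : probability T R) (G : nat -> set T) (q : R).

Hypothesis G_meas : forall m, measurable (G m).
Hypothesis G_indep : forall U : seq nat, uniq U ->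
  P (\big[setI/setT]_(m <- U) G m) = (q ^+ size U)%:E.
Hypothesis q_gt0 : 0 < q.

Lemma trial_prob_le1 : q <= 1.
Proof.
have := @G_indep [:: 0%N] erefl; rewrite big_seq1 expr1 -lee_fin => <-.
exact: probability_le1.
Qed.

(* Independence extends to complements: by induction on S, removing one
   complemented event at a time with P (A `\` B) = P A - P (A `&` B). *)
Lemma trials_mixed S U : uniq (S ++ U) ->
  P ((\big[setI/setT]_(m <- S) ~` G m) `&` (\big[setI/setT]_(m <- U) G m))
  = ((1 - q) ^+ size S * q ^+ size U)%:E.
Proof.
elim: S U => [|m S IH] U uSU; first by rewrite big_nil setTI G_indep // mul1r.
set A := (\big[setI/setT]_(m <- S) ~` G m) `&` (\big[setI/setT]_(m <- U) G m).
have mA : measurable A.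
  by apply: measurableI; apply: bigsetI_measurable => i _; [apply: measurableC|].
have -> : (\big[setI/setT]_(m0 <- m :: S) ~` G m0) `&`
          (\big[setI/setT]_(m0 <- U) G m0) = A `\` G m.
  by rewrite big_cons setDE /A -setIA setIC.
have -> : P (A `\` G m) = (P A - P (A `&` G m))%E.
  apply: measureD => //.
  by apply: le_lt_trans (probability_le1 P mA) _; rewrite ltry.
have -> : A `&` G m = (\big[setI/setT]_(m0 <- S) ~` G m0) `&`
          (\big[setI/setT]_(m0 <- m :: U) G m0).
  by rewrite big_cons /A setIAC -setIA [G m `&` _]setIC.
rewrite IH; last by rewrite -cat1s uniq_catCA.
rewrite /A IH; last by case/andP: uSU.
by rewrite -EFinB /= !exprS; congr (_%:E); ring.
Qed.

(* Almost surely infinitely many of the events G m occur: beyond any a, the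
   probability that none of r given events occurs is (1 - q) ^+ r. *)
Lemma trials_infinitely_often :
  {ae P, forall w, forall a, exists2 m, (a <= m)%N & G m w}.
Proof.
apply: ae_foralln => a.
set Z := \bigcap_(m in [set m | (a <= m)%N]) ~` G m.
have mZ : measurable Z.
  by apply: bigcap_measurableType => m _; apply/measurableC/G_meas.
have PZ_le r : (P Z <= ((1 - q) ^+ r)%:E)%E.
  have := @trials_mixed (iota a r) [::]; rewrite cats0 iota_uniq => /(_ erefl).
  rewrite big_nil setIT size_iota expr0 mulr1 => <-.
  apply: le_measure; rewrite ?inE //.
    by apply: bigsetI_measurable => m _; apply/measurableC/G_meas.
  move=> w Zw; rewrite -bigcap_seq => m /=; rewrite mem_iota => /andP [am _].
  exact: Zw.
have PZ_fin : P Z \is a fin_num.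
  rewrite ge0_fin_numE ?measure_ge0 //.
  by apply: le_lt_trans (probability_le1 P mZ) _; rewrite ltry.
have PZ0 : P Z = 0.
  rewrite -(fineK PZ_fin); congr (_%:E); apply/eqP.
  rewrite eq_le fine_ge0 ?measure_ge0 // andbT.
  apply: (@le_all_expr_le0 _ _ (1 - q)).
  - by rewrite subr_ge0 trial_prob_le1.
  - by rewrite ltrBlDr ltrDl.
  - by move=> r; rewrite -lee_fin fineK.
exists Z; split => // w /= never m am Gm.
by apply: never; exists m.
Qed.

End IndependentTrials.

Section RandomDraws.
Variables (d : measure_display) (T : measurableType d) (R : realType)
  (P : probability T R) (N : nat) (E : rel 'I_N)
  (W : nat -> 'I_N -> option 'I_N -> T -> R).
Hypothesis W_unif :
  forall k i o, relevant_index E (k, i, o) -> uniform01 P (W k i o).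

Definition draw (t : nat * 'I_N * option 'I_N) : T -> R := W t.1.1 t.1.2 t.2.

Lemma draw_preimage_measurable t (A : set R) : relevant_index E t ->
  measurable A -> measurable (draw t @^-1` A).
Proof.
case: t => [[k i] o] rt mA; have [mW _] := W_unif rt.
by rewrite -[_ @^-1` _]setTI; apply: mW.
Qed.

Lemma prob_draw_ge_half t : relevant_index E t ->
  P (draw t @^-1` `[2^-1, +oo[) = (2^-1)%:E.
Proof.
case: t => [[k i] o] rt; have [_ -> //] := W_unif rt.
have -> : `[(2^-1 : R), +oo[ `&` `]0, 1[ = `[(2^-1 : R), 1[%classic.
  apply/seteqP; split => x /=; rewrite !in_itv /= ?andbT.
    by move=> [-> /andP [_ ->]].
  move=> /andP [hx ->]; split => //; rewrite andbT.
  by apply: lt_le_trans hx; rewrite invr_gt0.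
rewrite lebesgue_measure_itv /= lte_fin invf_lt1 ?ltr1n // -EFinB.
by congr (_%:E); field.
Qed.

Lemma prob_draw_outside01 t : relevant_index E t ->
  P (draw t @^-1` ~` `]0, 1[) = 0.
Proof.
case: t => [[k i] o] rt; have [_ ->] := W_unif rt.
  by rewrite setICl measure0.
by apply: measurableC; apply: measurable_itv.
Qed.

Lemma draws_in01_ae :
  {ae P, forall w, forall k, (0 < k)%N -> draws_in01 E W k w}.
Proof.
apply: ae_foralln => -[|k]; first exact: aeW.
suff : {ae P, forall w, forall i o, drawn E i o -> 0 < W k.+1 i o w < 1}.
  by apply: filterS => w H _.
apply: filter_forall => i; apply: filter_forall => o.
case io : (drawn E i o); last exact: aeW.
have rt : relevant_index E (k.+1, i, o) by split => //; case: o io.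
exists (draw (k.+1, i, o) @^-1` ~` `]0, 1[); split.
- by apply: draw_preimage_measurable rt (measurableC (measurable_itv _)).
- exact: prob_draw_outside01 rt.
- by move=> w /= out01 in01; apply: out01 => _; rewrite in_itv in in01.
Qed.

Variables (L : nat) (L0 : (0 < L)%N).

Definition block_slots : seq (nat * ('I_N * option 'I_N)) :=
  [seq (t, x) | t <- iota 0 L, x <- [seq x <- enum [set: 'I_N * option 'I_N]
                                     | drawn E x.1 x.2]].

Definition slot_index m (s : nat * ('I_N * option 'I_N)) :=
  ((m * L + s.1.+1)%N, s.2.1, s.2.2).

Definition good_block m : set T :=
  \big[setI/setT]_(s <- block_slots) draw (slot_index m s) @^-1` `[2^-1, +oo[.

Lemma mem_block_slots s :
  (s \in block_slots) = (s.1 < L)%N && drawn E s.2.1 s.2.2.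
Proof.
case: s => t x; apply/allpairsP/andP => [[[t' x'] [/= ht hx [-> ->]]]|[ht hx]].
  by rewrite mem_iota add0n in ht; rewrite mem_filter in hx; case/andP: hx.
by exists (t, x); rewrite /= mem_iota mem_filter mem_enum in_setT hx ht.
Qed.

Lemma slot_index_relevant m s :
  s \in block_slots -> relevant_index E (slot_index m s).
Proof.
by rewrite mem_block_slots => /andP [_]; case: s => t [i []]; rewrite /= addnS.
Qed.

Lemma slot_index_inj m m' s s' : s \in block_slots -> s' \in block_slots ->
  slot_index m s = slot_index m' s' -> m = m' /\ s = s'.
Proof.
case: s s' => t [i o] [t' [i' o']]; rewrite !mem_block_slots.
move=> /andP [/= tL _] /andP [/= t'L _] [+ -> ->]; rewrite !addnS => -[mt].
have mm' : m = m'.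
  by move/(congr1 (divn^~ L)): mt; rewrite !divnMDl // !divn_small // !addn0.
by move: mt; rewrite mm' => /addnI ->.
Qed.

Lemma good_blocks_indep :
  mutually_independent P (relevant_index E) (fun t => W t.1.1 t.1.2 t.2) ->
  forall U, uniq U -> P (\big[setI/setT]_(m <- U) good_block m) =
    (((2^-1) ^+ size block_slots) ^+ size U)%:E.
Proof.
move=> indep U uU.
set s := [seq slot_index m x | m <- U, x <- block_slots].
have -> : \big[setI/setT]_(m <- U) good_block m =
    \big[setI/setT]_(t <- s) draw t @^-1` `[2^-1, +oo[.
  by rewrite big_allpairs_dep.
have s_rel t : t \in s -> relevant_index E t.
  by move=> /allpairsP [[m x] [/= _ hx ->]]; apply: slot_index_relevant.
have s_uniq : uniq s.
  apply: allpairs_uniq => // [|[m x] [m' x']].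
    apply: allpairs_uniq; [exact: iota_uniq | exact/filter_uniq/enum_uniq |].
    by move=> [? ?] [? ?] _ _ [-> ->].
  move=> /allpairsP [[? ?] [/= _ hx [-> ->]]].
  move=> /allpairsP [[? ?] [/= _ hx' [-> ->]]].
  by move=> /(slot_index_inj hx hx') [-> ->].
rewrite (indep s (fun=> `[(2^-1 : R), +oo[%classic) s_uniq s_rel); last first.
  by move=> _; apply: measurable_itv.
rewrite big_seq (eq_bigr (fun=> (2^-1)%:E)); last first.
  by move=> t /s_rel; apply: prob_draw_ge_half.
rewrite -big_seq prodEFin -exprM mulnC.
rewrite -[(size U * _)%N](size_allpairs slot_index).
rewrite -/s; congr (_%:E); elim: (s) => [|t s' IH]; first by rewrite big_nil.
by rewrite big_cons IH exprS.
Qed.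

Lemma good_block_measurable m : measurable (good_block m).
Proof.
rewrite /good_block big_seq; apply: bigsetI_measurable => s hs.
exact: draw_preimage_measurable (slot_index_relevant m hs) (measurable_itv _).
Qed.

Lemma good_blocks_io :
  mutually_independent P (relevant_index E) (fun t => W t.1.1 t.1.2 t.2) ->
  {ae P, forall w, forall a, exists2 m, (a <= m)%N & good_block m w}.
Proof.
move=> indep; apply: (trials_infinitely_often good_block_measurable
  (good_blocks_indep indep)).
by rewrite !exprn_gt0 // invr_gt0.
Qed.

End RandomDraws.

Theorem lemma1 (d : measure_display) (T : measurableType d) (R : realType)
  (P : probability T R) (N : nat) (E : rel 'I_N)
  (W : nat -> 'I_N -> option 'I_N -> T -> R) :
  (2 < N)%N ->
  no_self_loops E ->
  strongly_connected E ->
  (forall k i o, relevant_index E (k, i, o) -> uniform01 P (W k i o)) ->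
  mutually_independent P (relevant_index E) (fun t => W t.1.1 t.1.2 t.2) ->
  {ae P, forall w, (fun k => ergodicity_coef (Tprod E W k w)) @ \oo --> (0 : R)}.
Proof.
move=> N2 _ sc W_unif indep.
have [L L0 walkL] := aug_walk_uniform sc.
apply: filterS2 (draws_in01_ae W_unif) (good_blocks_io W_unif L0 indep).
move=> w in01 good_io.
apply: ergodicity_Tprod_cvg0 walkL in01 _ => [|a]; first exact: ltn_trans N2.
have [m am good] := good_io a; exists (m * L)%N.
  by apply: leq_trans am (leq_pmulr _ L0).
move=> t tL i o io; move: good; rewrite /good_block -bigcap_seq.
move=> /(_ (t, (i, o))) /=; rewrite in_itv /= andbT; apply.
by rewrite mem_block_slots tL.
Qed.
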